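(* Let $G$ be a connected bipartite finite simple graph with parts $X$ and $Y$, and let $\mathcal{N}G$ be its normal graph algebra over a field $\mathbb{F}$ of characteristic not $2$. Then $\mathrm{ann}\,G$ is the one-dimensional span $\left\langle \sum_{x\in X}x-\sum_{y\in Y}y\right\rangle$.
   Context: For a finite simple graph $G$ with vertex set $VG$ and edge set $EG$ (edge with endpoints $x,y$ written $[x,y]$), the normal graph algebra $\mathcal{N}G$ is the $\mathbb{F}$-vector space $U_G\oplus\mathfrak{Z}_G$, where $U_G$ has basis $VG$ and $\mathfrak{Z}_G$ has basis $EG$, with commutative bilinear product determined by: for distinct vertices $x,y$, $xy=[x,y]$ if adjacent and $0$ otherwise; $x^2=\sum_{y\sim x}[x,y]$; all products involving an element of $\mathfrak{Z}_G$ are $0$. Equivalently, for $u=\sum_x\theta_x x$, $v=\sum_x\eta_x x$, $uv=\sum_{[x,y]\in EG}(\theta_x+\theta_y)(\eta_x+\eta_y)[x,y]$. The annihilator is $\mathrm{ann}\,G=\{u\in U_G: uv=0\text{ for all }v\in U_G\}$. *)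

From HB Require Import structures.
From mathcomp Require Import all_boot all_order all_algebra.
Set Implicit Arguments. Unset Strict Implicit. Unset Printing Implicit Defensive.
Import GRing.Theory.
Local Open Scope ring_scope.

Definition simple_graph (T : finType) (e : rel T) : Prop :=
  symmetric e /\ irreflexive e.

Definition connected_graph (T : finType) (e : rel T) : Prop :=
  forall x y : T, connect e x y.

Definition bipartition (T : finType) (e : rel T) (X Y : {set T}) : Prop :=
  [/\ X :&: Y = set0, X :|: Y = setT &
      forall x y, e x y -> (x \in X) && (y \in Y) || (x \in Y) && (y \in X)].

(* U_G : F-vector space with basis VG, elements are coordinate vectors
   u = sum_x u x * x. *)
Notation UG F T := {ffun T -> F} (only parsing).

(* Z_G coordinates: the coefficient of the edge [x,y] is stored at (x,y)
   (and symmetrically at (y,x)); non-edges carry 0.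
   Product: uv = sum_{[x,y] in EG} (u x + u y)(v x + v y) [x,y]. *)
Definition ng_mul (F : fieldType) (T : finType) (e : rel T)
    (u v : UG F T) : {ffun T * T -> F} :=
  [ffun p => if e p.1 p.2 then (u p.1 + u p.2) * (v p.1 + v p.2) else 0].

Definition ann (F : fieldType) (T : finType) (e : rel T) (u : UG F T) : Prop :=
  forall v : UG F T, ng_mul e u v = 0.

Definition alt_vec (F : fieldType) (T : finType) (X Y : {set T}) : UG F T :=
  [ffun z => (z \in X)%:R - (z \in Y)%:R].

(* An element u lies in ann G iff u x + u y = 0 on every edge [x,y]: test it
   against the basis vector x, for which the factor (v x + v y) equals 1.
   Such "edge-alternating" functions are determined on a connected graph by
   their value at a single vertex, and the alternating sign vector of a
   bipartition is one of them with value +-1 everywhere. *)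

From HB Require Import structures.
From mathcomp Require Import all_boot all_order all_algebra.
Set Implicit Arguments. Unset Strict Implicit. Unset Printing Implicit Defensive.
Import GRing.Theory.
Local Open Scope ring_scope.

Definition edge_alternating (T : finType) (e : rel T) (V : zmodType) (f : T -> V) :=
  forall x y, e x y -> f x + f y = 0.

Lemma edge_alternating_scale (T : finType) (e : rel T) (R : pzRingType)
    (c : R) (f : T -> R) :
  edge_alternating e f -> edge_alternating e (fun x => c * f x).
Proof. by move=> fA x y /fA; rewrite -mulrDr => ->; rewrite mulr0. Qed.

Lemma edge_alternating_connect_eq (T : finType) (e : rel T) (V : zmodType)
    (f g : T -> V) (z x : T) :
  edge_alternating e f -> edge_alternating e g ->
  connect e z x -> f z = g z -> f x = g x.
Proof.
move=> fA gA /connectP[p]; elim: p z => [|y p IHp] z /=; first by move=> _ ->.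
case/andP=> ezy pP lastP fgz; apply: (IHp y pP lastP).
by apply/eqP; rewrite -(inj_eq (addrI (f z))) {2}fgz fA // gA.
Qed.

Lemma ann_edge_alternating (F : fieldType) (T : finType) (e : rel T)
    (u : UG F T) :
  irreflexive e -> ann e u <-> edge_alternating e u.
Proof.
move=> irr_e; split=> [annu x y exy | uA v].
  have nyx : y != x by apply: contraTneq exy => ->; rewrite irr_e.
  have := congr1 (fun w : {ffun T * T -> F} => w (x, y)) (annu [ffun z => (z == x)%:R]).
  by rewrite !ffunE /= exy eqxx (negPf nyx) addr0 mulr1.
by apply/ffunP=> -[x y]; rewrite !ffunE /=; case: ifP => // /uA ->; rewrite mul0r.
Qed.

Section Bipartition.

Variables (F : fieldType) (T : finType) (X Y : {set T}).
Hypotheses (disjXY : X :&: Y = set0) (coverXY : X :|: Y = setT).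

Lemma alt_vec_sign z : alt_vec F X Y z = if z \in X then 1 else -1.
Proof.
have inXY : z \in X :|: Y by rewrite coverXY inE.
have notXY : (z \in X) && (z \in Y) = false by rewrite -in_setI disjXY inE.
rewrite ffunE; move: inXY notXY; rewrite inE.
by case: (z \in X); case: (z \in Y) => //= _ _; rewrite ?subr0 ?sub0r.
Qed.

Lemma alt_vec_sqr z : alt_vec F X Y z * alt_vec F X Y z = 1.
Proof. by rewrite alt_vec_sign; case: ifP; rewrite ?mulrNN mulr1. Qed.

Lemma alt_vec_edge_alternating (e : rel T) :
  bipartition e X Y -> edge_alternating e (alt_vec F X Y).
Proof.
case=> _ _ eXY x y /eXY; rewrite !alt_vec_sign.
have notXY z : z \in Y -> (z \in X) = false.
  by move=> zY; apply/negP => zX; have := in_set0 z; rewrite -disjXY inE zX zY.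
by case/orP=> /andP[xP yP]; rewrite ?xP ?yP ?notXY // ?addrN ?addNr.
Qed.

End Bipartition.

Theorem corollary5p4 (F : fieldType) (T : finType) (e : rel T) (X Y : {set T}) :
  ~~ (2%N \in [pchar F]) ->
  simple_graph e -> connected_graph e -> bipartition e X Y ->
  forall u : UG F T, ann e u <-> exists c : F, forall x : T, u x = c * alt_vec F X Y x.
Proof.
move=> _ [_ irr_e] conn_e bip u; have [disjXY coverXY _] := bip.
have altA := alt_vec_edge_alternating F disjXY coverXY bip.
split=> [/(ann_edge_alternating _ irr_e) uA | [c uE]]; last first.
  apply/(ann_edge_alternating _ irr_e) => x y exy.
  by rewrite !uE; exact: (edge_alternating_scale c altA exy).
have [z0 _ | T0] := pickP (@predT T); last by exists 0 => x; have := T0 x.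
exists (u z0 * alt_vec F X Y z0) => x.
apply: (edge_alternating_connect_eq uA (edge_alternating_scale _ altA) (conn_e z0 x)).
by rewrite -mulrA alt_vec_sqr // mulr1.
Qed.
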